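(* Let $M$ be an ACI-matrix over a field $\mathbb{F}$. If $F_1,F_2$ are factor sets of $M$, then $F_1\cap F_2$ and $F_1\cup F_2$ are factor sets of $M$. If $F_1,F_2$ are semifactor sets of $M$, then $F_1\cap F_2$ and $F_1\cup F_2$ are semifactor sets of $M$.
   Context: Let $\mathbb{F}$ be a field. An ACI-matrix is a matrix with entries in $\mathbb{F}[x_1,\dots,x_k]$ whose entries are polynomials of degree at most one and such that no indeterminate appears in two different columns. A completion is an assignment of values in $\mathbb{F}$ to all indeterminates; $\mathrm{maxRank}(N)$ is the maximum rank of a completion. ACI-matrices (and blocks) of size $0\times q$ ($q>0$, wide degenerate), $p\times 0$ ($p>0$, tall degenerate) and $0\times0$ (void) are allowed. $N$ is FRmR if $\mathrm{maxRank}(N)=\mathrm{rows}(N)$, FCmR if $\mathrm{maxRank}(N)=\mathrm{cols}(N)$; by convention tall degenerate is FRmR, wide degenerate is FCmR, void is both. For an $m\times n$ block matrix $\begin{bmatrix} A & B\\ 0 & C\end{bmatrix}$ with lower-left $r\times s$ zero block, the zero block is Big if $r+s>\max\{m,n\}$, Medium if $r+s=\max\{m,n\}$. For $F=\{f_1<\dots<f_s\}\subseteq\{1,\dots,n\}$ with complement $\{g_1<\dots<g_{n-s}\}$, $Q_F$ is the $n\times n$ permutation matrix such that $MQ_F$ has as columns $f_1,\dots,f_s,g_1,\dots,g_{n-s}$ of $M$ in that order. For an $m\times n$ ACI-matrix $M$, $F$ is a factor set of $M$ if there is a nonsingular constant $m\times m$ matrix $R$ with $RMQ_F=\begin{bmatrix}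 A & B\\ 0 & C\end{bmatrix}$, where $A$ has $\#F$ columns, the zero block is Big, $A$ is FRmR and $C$ is FCmR; $F$ is a semifactor set if the same holds with the zero block Medium. *)

From HB Require Import structures.
From mathcomp Require Import all_boot all_order all_algebra.
Set Implicit Arguments. Unset Strict Implicit. Unset Printing Implicit Defensive.
Import GRing.Theory.
Local Open Scope ring_scope.

(* An ACI-matrix of size m x n over K[x_0,...,x_{k-1}]: every entry is an
   affine polynomial  aci_const i j + \sum_t (aci_coef t) i j * x_t ;
   aci_coef t is the matrix of coefficients of the indeterminate x_t. *)
Record aci (K : fieldType) (k m n : nat) := ACI {
  aci_const : 'M[K]_(m, n);
  aci_coef  : 'I_k -> 'M[K]_(m, n) }.

Definition is_ACI (K : fieldType) k m n (N : aci K k m n) : Prop :=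
  forall (t : 'I_k) (j1 j2 : 'I_n),
    col j1 (aci_coef N t) != 0 -> col j2 (aci_coef N t) != 0 -> j1 = j2.

Definition completion (K : fieldType) k m n (N : aci K k m n) (v : 'I_k -> K)
  : 'M[K]_(m, n) := aci_const N + \sum_(t < k) v t *: aci_coef N t.

Definition is_maxRank (K : fieldType) k m n (N : aci K k m n) (r : nat) : Prop :=
  (exists v, \rank (completion N v) = r) /\ (forall v, (\rank (completion N v) <= r)%N).

Definition FRmR (K : fieldType) k m n (N : aci K k m n) : Prop :=
  n = 0%N \/ is_maxRank N m.
Definition FCmR (K : fieldType) k m n (N : aci K k m n) : Prop :=
  m = 0%N \/ is_maxRank N n.

Definition aci_map (K : fieldType) k m n m' n'
  (f : 'M[K]_(m, n) -> 'M[K]_(m', n')) (N : aci K k m n) : aci K k m' n' :=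
  ACI (f (aci_const N)) (fun t => f (aci_coef N t)).

Definition aci_mull (K : fieldType) k m n (R : 'M[K]_m) (N : aci K k m n) :=
  aci_map (fun A => R *m A) N.
Definition aci_mulr (K : fieldType) k m n (N : aci K k m n) (Q : 'M[K]_n) :=
  aci_map (fun A => A *m Q) N.

(* Submatrix with rows in I and columns in J (kept in increasing order). *)
Definition aci_sub (K : fieldType) k m n (I : {set 'I_m}) (J : {set 'I_n})
  (N : aci K k m n) : aci K k #|I| #|J| :=
  aci_map (mxsub (enum_val (A := mem I)) (enum_val (A := mem J))) N.

Definition entry_zero (K : fieldType) k m n (N : aci K k m n) (i : 'I_m) (j : 'I_n)
  : Prop := aci_const N i j = 0 /\ forall t, aci_coef N t i j = 0.

(* Q_F: the n x n permutation matrix such that M Q_F has as columns the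
   columns f_1 < ... < f_s of M followed by g_1 < ... < g_{n-s}
   (enum of a set of ordinals is increasing). *)
Definition QF (K : fieldType) n (F : {set 'I_n}) : 'M[K]_n :=
  \matrix_(i < n, j < n) ((i == nth j (enum F ++ enum (~: F)) j)%:R).

Definition factor_like (cmp : nat -> nat -> bool)
  (K : fieldType) k m n (M : aci K k m n) (F : {set 'I_n}) : Prop :=
  exists (R : 'M[K]_m), R \in unitmx /\
  exists r : nat, (r <= m)%N /\
    let N := aci_mulr (aci_mull R M) (QF K F) in
    let s := #|F| in
    let top := [set i : 'I_m | (i < m - r)%N] in
    let bot := [set i : 'I_m | (m - r <= i)%N] in
    let lft := [set j : 'I_n | (j < s)%N] in
    let rgt := [set j : 'I_n | (s <= j)%N] in
    (forall (i : 'I_m) (j : 'I_n), (m - r <= i)%N -> (j < s)%N -> entry_zero N i j)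
    /\ cmp (r + s)%N (maxn m n)
    /\ FRmR (aci_sub top lft N)
    /\ FCmR (aci_sub bot rgt N).

Definition factor_set (K : fieldType) k m n (M : aci K k m n) (F : {set 'I_n}) :=
  factor_like (fun a b => (b < a)%N) M F.
Definition semifactor_set (K : fieldType) k m n (M : aci K k m n) (F : {set 'I_n}) :=
  factor_like (fun a b => a == b) M F.

(* For a set F of columns, let w(F) be the dimension of the span of the
   columns of index in F of all the coefficient matrices of M.  The columns in
   F of any completion X lie in that span, so rank X + |F| <= n + w(F); call F
   tight at X when equality holds.  F is a factor (resp. semifactor) set
   exactly when it is tight at some completion X and the zero block size
   m + n - rank X is Big (resp. Medium): the last r rows of R kill the span,
   so w(F) <= m - r, while the block triangular shape forces
   rank X >= (m - r) + (n - |F|); conversely, a basis adapted to the span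
   yields R.  Tightness forces rank X to be maximal, and since w is
   submodular while |F| is modular, the sets tight at a completion of maximal
   rank are closed under intersection and union. *)

From mathcomp Require Import all_boot all_order all_algebra.
From mathcomp Require Import zify perm.
Set Implicit Arguments. Unset Strict Implicit. Unset Printing Implicit Defensive.
Import GRing.Theory.
Local Open Scope ring_scope.

Section MaskMatrix.
Variable R : pzSemiRingType.

(* Blocks are handled as mask_mx I *m A *m mask_mx J, which has the rank of the
   I x J submatrix (mxrank_mxsub) but keeps the ambient size. *)
Definition mask_mx n (S : {set 'I_n}) : 'M[R]_n := diag_mx (\row_i (i \in S)%:R).

Lemma mul_mask_mx m n (S : {set 'I_m}) (A : 'M[R]_(m, n)) i j :
  (mask_mx S *m A) i j = (i \in S)%:R * A i j.
Proof. by rewrite mul_diag_mx !mxE. Qed.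

Lemma mul_mx_mask m n (S : {set 'I_n}) (A : 'M[R]_(m, n)) i j :
  (A *m mask_mx S) i j = A i j * (j \in S)%:R.
Proof. by rewrite mul_mx_diag !mxE. Qed.

Lemma mask_mxM n (S T : {set 'I_n}) : mask_mx S *m mask_mx T = mask_mx (S :&: T).
Proof.
apply/matrixP=> i j; rewrite mul_mask_mx !mxE in_setI.
by case: (i \in S); case: (i \in T); case: (i == j); rewrite /= ?mul1r ?mul0r.
Qed.

Lemma add_mask_mxC n (S : {set 'I_n}) : mask_mx S + mask_mx (~: S) = 1%:M.
Proof.
apply/matrixP=> i j; rewrite !mxE in_setC.
by case: (i \in S); case: (i == j); rewrite /= ?addr0 ?add0r.
Qed.

Lemma tr_mask_mx n (S : {set 'I_n}) : (mask_mx S)^T = mask_mx S.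
Proof. exact: tr_diag_mx. Qed.

Lemma mask_mxU n (S T : {set 'I_n}) :
  mask_mx (S :|: T) = mask_mx S + mask_mx (T :\: S) *m mask_mx T.
Proof.
rewrite mask_mxM; apply/matrixP => i j; rewrite !mxE !inE.
by case: (i \in S); case: (i \in T); case: (i == j); rewrite /= ?addr0 ?add0r.
Qed.

Lemma mask_mx_splitl m n (S : {set 'I_m}) (A : 'M[R]_(m, n)) :
  A = mask_mx S *m A + mask_mx (~: S) *m A.
Proof. by rewrite -mulmxDl add_mask_mxC mul1mx. Qed.

Lemma mask_mx_splitr m n (S : {set 'I_n}) (A : 'M[R]_(m, n)) :
  A = A *m mask_mx S + A *m mask_mx (~: S).
Proof. by rewrite -mulmxDr add_mask_mxC mulmx1. Qed.

End MaskMatrix.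

Arguments mask_mx {R n} S.

Section MaskRank.
Variable K : fieldType.

Definition sel_mx n (S : {set 'I_n}) : 'M[K]_(#|S|, n) :=
  rowsub (enum_val (A := mem S)) 1%:M.

Lemma sel_mx_tr n (S : {set 'I_n}) : sel_mx S *m (sel_mx S)^T = 1%:M.
Proof.
apply/matrixP=> a b; rewrite !mxE (bigD1 (enum_val (A := mem S) a)) //=.
rewrite big1 ?addr0 => [|i /negPf ai]; last by rewrite !mxE eq_sym ai mul0r.
by rewrite !mxE eqxx mul1r (inj_eq enum_val_inj) eq_sym.
Qed.

Lemma tr_sel_mx_sel n (S : {set 'I_n}) : (sel_mx S)^T *m sel_mx S = mask_mx S.
Proof.
apply/matrixP=> i j; rewrite !mxE.
under eq_bigr => a _ do rewrite !mxE.
case Si: (i \in S).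
  rewrite (bigD1 (enum_rank_in Si i)) //= big1 ?addr0 => [|a ai].
    by rewrite enum_rankK_in // eqxx mul1r.
  case: eqP => [E|]; last by rewrite mul0r.
  by case/eqP: ai; rewrite -[a](enum_valK_in Si) E.
rewrite big1 ?mul0rn // => a _; case: eqP => [E|]; last by rewrite mul0r.
by move: (enum_valP a); rewrite E Si.
Qed.

Lemma mxsub_sel_mx m n (I : {set 'I_m}) (J : {set 'I_n}) (A : 'M[K]_(m, n)) :
  mxsub (enum_val (A := mem I)) (enum_val (A := mem J)) A
  = sel_mx I *m A *m (sel_mx J)^T.
Proof.
rewrite -{1}[A]mulmx1 mxsub_mul rowsubE; congr (_ *m _).
by apply/matrixP=> i j; rewrite !mxE eq_sym.
Qed.

Lemma mxrank_mxsub m n (I : {set 'I_m}) (J : {set 'I_n}) (A : 'M[K]_(m, n)) :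
  \rank (mxsub (enum_val (A := mem I)) (enum_val (A := mem J)) A)
  = \rank (mask_mx I *m A *m mask_mx J).
Proof.
have rank_sandwich p q r s (X : 'M[K]_(p, q)) (Y : 'M[K]_(r, p)) (Z : 'M[K]_(q, s)) :
    (\rank (Y *m X *m Z) <= \rank X)%N.
  exact: leq_trans (mxrankM_maxl _ _) (mxrankM_maxr _ _).
rewrite mxsub_sel_mx; apply/eqP; rewrite eqn_leq; apply/andP; split.
  have -> : sel_mx I *m A *m (sel_mx J)^T
            = sel_mx I *m (mask_mx I *m A *m mask_mx J) *m (sel_mx J)^T.
    by rewrite -!tr_sel_mx_sel !mulmxA sel_mx_tr mul1mx -!mulmxA sel_mx_tr mulmx1.
  exact: rank_sandwich.
have -> : mask_mx I *m A *m mask_mx J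
          = (sel_mx I)^T *m (sel_mx I *m A *m (sel_mx J)^T) *m sel_mx J.
  by rewrite -!tr_sel_mx_sel !mulmxA.
exact: rank_sandwich.
Qed.

Lemma mxrank_mask_mx n (S : {set 'I_n}) : \rank (mask_mx S : 'M[K]_n) = #|S|.
Proof.
apply/eqP; rewrite eqn_leq -{1}tr_sel_mx_sel.
apply/andP; split; first exact: leq_trans (mxrankM_maxr _ _) (rank_leq_row _).
have := mxrank_mxsub S S (1%:M : 'M[K]_n); rewrite mulmx1 mask_mxM setIid => <-.
by rewrite mxsub_sel_mx mulmx1 sel_mx_tr mxrank1.
Qed.

Lemma mxrank_mask_le_rows m n (I : {set 'I_m}) (J : {set 'I_n}) (A : 'M[K]_(m, n)) :
  (\rank (mask_mx I *m A *m mask_mx J) <= #|I|)%N.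
Proof. by rewrite -mulmxA -(mxrank_mask_mx I) mxrankM_maxl. Qed.

Lemma mxrank_mask_le_cols m n (I : {set 'I_m}) (J : {set 'I_n}) (A : 'M[K]_(m, n)) :
  (\rank (mask_mx I *m A *m mask_mx J) <= #|J|)%N.
Proof. by rewrite -(mxrank_mask_mx J) mxrankM_maxr. Qed.

End MaskRank.

Section UpperTriangularBlocks.
Variables (K : fieldType) (m n : nat) (T : {set 'I_m}) (L : {set 'I_n}).
Variable P : 'M[K]_(m, n).
Hypothesis P_utri : mask_mx (~: T) *m P *m mask_mx L = 0.

Lemma mulmx_mask_utri_l : P *m mask_mx L = mask_mx T *m P *m mask_mx L.
Proof. by rewrite {1}(mask_mx_splitl T P) mulmxDl P_utri addr0. Qed.

Lemma mulmx_mask_utri_r : mask_mx (~: T) *m P = mask_mx (~: T) *m P *m mask_mx (~: L).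
Proof. by rewrite {1}(mask_mx_splitr L (_ *m P)) P_utri add0r. Qed.

Lemma mxrank_utri_le_l :
  (\rank P <= \rank (mask_mx T *m P *m mask_mx L) + #|~: L|)%N.
Proof.
rewrite {1}(mask_mx_splitr L P) mulmx_mask_utri_l.
apply: leq_trans (mxrank_add _ _) _.
by rewrite leq_add2l -(mxrank_mask_mx K) mxrankM_maxr.
Qed.

Lemma mxrank_utri_le_r :
  (\rank P <= #|T| + \rank (mask_mx (~: T) *m P *m mask_mx (~: L)))%N.
Proof.
rewrite {1}(mask_mx_splitl T P) mulmx_mask_utri_r.
apply: leq_trans (mxrank_add _ _) _; apply: leq_add.
  by apply: leq_trans (mxrankM_maxl _ _) _; rewrite mxrank_mask_mx.
by rewrite -[X in (_ <= \rank X)%N]mulmxA mask_mxM setIid.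
Qed.

Lemma mxrank_utri_ge :
  (\rank (mask_mx T *m P *m mask_mx L)
   + \rank (mask_mx (~: T) *m P *m mask_mx (~: L)) <= \rank P)%N.
Proof.
rewrite -(mxrank_mul_ker P (mask_mx L)) mulmx_mask_utri_l leq_add2l.
apply: mxrankS; rewrite sub_capmx -mulmx_mask_utri_r submxMl /=.
exact/sub_kermxP.
Qed.

Lemma mxrank_utri_full : \rank P = (#|T| + #|~: L|)%N ->
  \rank (mask_mx T *m P *m mask_mx L) = #|T| /\
  \rank (mask_mx (~: T) *m P *m mask_mx (~: L)) = #|~: L|.
Proof.
move=> rkP; have := mxrank_utri_le_l; have := mxrank_utri_le_r.
have := mxrank_mask_le_rows T L P; have := mxrank_mask_le_cols (~: T) (~: L) P.
by rewrite rkP; split; lia.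
Qed.

End UpperTriangularBlocks.

Lemma card_ord_lt m a : (a <= m)%N -> #|[set i : 'I_m | (i < a)%N]| = a.
Proof.
move=> le_am; have widen_inj : injective (widen_ord le_am).
  by move=> x y /(congr1 val) xy; apply: val_inj.
rewrite -[RHS]card_ord -(card_imset _ widen_inj).
apply: eq_card => i; rewrite inE; apply/idP/imsetP => [lt_ia|[j _ ->]].
  by exists (Ordinal lt_ia); last exact: val_inj.
exact: (ltn_ord j).
Qed.

Lemma setC_ord_lt m a : ~: [set i : 'I_m | (i < a)%N] = [set i : 'I_m | (a <= i)%N].
Proof. by apply/setP => i; rewrite !inE -leqNgt. Qed.

Lemma card_ord_ge m a : (a <= m)%N -> #|[set i : 'I_m | (a <= i)%N]| = (m - a)%N.
Proof.
move=> le_am; have := cardsC [set i : 'I_m | (i < a)%N].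
by rewrite setC_ord_lt card_ord card_ord_lt //; lia.
Qed.

Lemma submod_minimizers_setIU (T : finType) (f : {set T} -> nat) (b : nat)
    (A B : {set T}) :
  (f (A :&: B) + f (A :|: B) <= f A + f B)%N -> (forall X : {set T}, b + #|X| <= f X)%N ->
  (b + #|A| = f A)%N -> (b + #|B| = f B)%N ->
  (b + #|A :&: B| = f (A :&: B))%N /\ (b + #|A :|: B| = f (A :|: B))%N.
Proof.
move=> f_submod f_ge fA fB; have := cardsUI A B.
by have := f_ge (A :&: B); have := f_ge (A :|: B); split; lia.
Qed.

Section ColumnPermutation.
Variables (K : fieldType) (n : nat) (F : {set 'I_n}).

Let cols := enum F ++ enum (~: F).

Lemma size_cols : size cols = n.
Proof. by rewrite size_cat -!cardE cardsC card_ord. Qed.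

Lemma nth_cols_in (j : 'I_n) : (nth j cols j \in F) = (j < #|F|)%N.
Proof.
have := size_cols; rewrite nth_cat size_cat -!cardE => sizeE.
case: ifP => lt_jF.
  by have := @mem_nth _ j (enum F) j; rewrite mem_enum -cardE => ->.
have lt_j : (j - #|F| < #|~: F|)%N by move: (ltn_ord j); lia.
have := @mem_nth _ j (enum (~: F)) (j - #|F|).
by rewrite mem_enum -cardE inE => /(_ lt_j) /negbTE.
Qed.

Lemma cols_inj : injective (fun j : 'I_n => nth j cols j).
Proof.
move=> i j /=; rewrite (set_nth_default i j) ?size_cols // => /eqP.
rewrite nth_uniq ?size_cols // => [/eqP/val_inj //|].
rewrite cat_uniq !enum_uniq andbT /=.
by apply/hasPn => x; rewrite !mem_enum inE => /negbTE ->.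
Qed.

Lemma QF_perm_mx : QF K F = (perm_mx (perm cols_inj))^T.
Proof. by apply/matrixP => i j; rewrite !mxE permE eq_sym. Qed.

Lemma QF_unit : QF K F \in unitmx.
Proof. by rewrite QF_perm_mx unitmx_tr unitmx_perm. Qed.

Lemma QF_mask_mx (S T : {set 'I_n}) :
  (forall j, (nth j cols j \in S) = (j \in T)) ->
  QF K F *m mask_mx T = mask_mx S *m QF K F.
Proof.
move=> ST; apply/matrixP => i j; rewrite mul_mask_mx mul_mx_mask !mxE.
by case: eqP => [->|]; rewrite ?ST ?mul1r ?mulr1 ?mulr0 ?mul0r.
Qed.

Lemma QF_mask_lt : QF K F *m mask_mx [set j : 'I_n | (j < #|F|)%N] = mask_mx F *m QF K F.
Proof. by apply: QF_mask_mx => j; rewrite nth_cols_in inE. Qed.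

Lemma QF_mask_ge : QF K F *m mask_mx [set j : 'I_n | (#|F| <= j)%N] = mask_mx (~: F) *m QF K F.
Proof. by apply: QF_mask_mx => j; rewrite in_setC nth_cols_in inE -leqNgt. Qed.

Lemma mxrank_QF_mask_lt m (S : {set 'I_m}) (C : 'M[K]_(m, n)) :
  \rank (mask_mx S *m (C *m QF K F) *m mask_mx [set j : 'I_n | (j < #|F|)%N])
  = \rank (mask_mx S *m C *m mask_mx F).
Proof. by rewrite -!mulmxA QF_mask_lt !mulmxA mxrankMfree ?row_free_unit ?QF_unit. Qed.

Lemma mxrank_QF_mask_ge m (S : {set 'I_m}) (C : 'M[K]_(m, n)) :
  \rank (mask_mx S *m (C *m QF K F) *m mask_mx [set j : 'I_n | (#|F| <= j)%N])
  = \rank (mask_mx S *m C *m mask_mx (~: F)).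
Proof. by rewrite -!mulmxA QF_mask_ge !mulmxA mxrankMfree ?row_free_unit ?QF_unit. Qed.

Lemma QF_mask_lt_eq0 m (S : {set 'I_m}) (C : 'M[K]_(m, n)) :
  (mask_mx S *m (C *m QF K F) *m mask_mx [set j : 'I_n | (j < #|F|)%N] == 0)
  = (mask_mx S *m C *m mask_mx F == 0).
Proof.
rewrite -!mulmxA QF_mask_lt !mulmxA; apply/eqP/eqP => [SCF0|->]; last exact: mul0mx.
by rewrite -(mulmxK QF_unit (_ *m mask_mx F)) SCF0 mul0mx.
Qed.

End ColumnPermutation.

Section Completions.
Variables (K : fieldType) (k : nat).
Implicit Types (v : 'I_k -> K).

Lemma completion_mxE m n (N : aci K k m n) v i j :
  completion N v i j = aci_const N i j + \sum_(t < k) v t * aci_coef N t i j.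
Proof. by rewrite !mxE summxE; under eq_bigr do rewrite mxE. Qed.

Lemma completion_mull m n (R : 'M[K]_m) (N : aci K k m n) v :
  completion (aci_mull R N) v = R *m completion N v.
Proof.
rewrite /completion mulmxDr mulmx_sumr; congr (_ + _).
by apply: eq_bigr => t _; rewrite scalemxAr.
Qed.

Lemma completion_mulr m n (N : aci K k m n) (Q : 'M[K]_n) v :
  completion (aci_mulr N Q) v = completion N v *m Q.
Proof.
rewrite /completion mulmxDl mulmx_suml; congr (_ + _).
by apply: eq_bigr => t _; rewrite scalemxAl.
Qed.

Lemma mxrank_completion_sub m n (I : {set 'I_m}) (J : {set 'I_n}) (N : aci K k m n) v :
  \rank (completion (aci_sub I J N) v) = \rank (mask_mx I *m completion N v *m mask_mx J).
Proof.
rewrite -mxrank_mxsub; congr (\rank _); apply/matrixP => i j.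
by rewrite completion_mxE [RHS]mxE completion_mxE /= mxE; under eq_bigr do rewrite mxE.
Qed.

Lemma completion_eq_col m n (N : aci K k m n) v v' j :
  (forall t i, aci_coef N t i j != 0 -> v t = v' t) ->
  forall i, completion N v i j = completion N v' i j.
Proof.
move=> vv' i; rewrite !completion_mxE; congr (_ + _); apply: eq_bigr => t _.
by case: (eqVneq (aci_coef N t i j) 0) => [->|/vv' ->]; rewrite ?mulr0.
Qed.

Lemma entry_zero_mask m n (N : aci K k m n) (I : {set 'I_m}) (J : {set 'I_n}) :
  (forall i j, i \in I -> j \in J -> entry_zero N i j) <->
  mask_mx I *m aci_const N *m mask_mx J = 0 /\
  forall t, mask_mx I *m aci_coef N t *m mask_mx J = 0.
Proof.
have maskE (A : 'M[K]_(m, n)) i j : (mask_mx I *m A *m mask_mx J) i j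
    = (i \in I)%:R * A i j * (j \in J)%:R by rewrite mul_mx_mask mul_mask_mx.
split => [IJ0 | [C0 T0] i j iI jJ].
  split => [|t]; apply/matrixP => i j; rewrite maskE mxE;
  case: (boolP (i \in I)) => iI; case: (boolP (j \in J)) => jJ;
  rewrite ?mulr0 ?mul0r //; have [C0 T0] := IJ0 i j iI jJ.
    by rewrite C0 mulr0 mul0r.
  by rewrite T0 mulr0 mul0r.
split => [|t]; [move/matrixP: C0 | move/matrixP: (T0 t)] => /(_ i j);
  by rewrite maskE mxE iI jJ mulr1 mul1r.
Qed.

Lemma completion_mask_eq0 m n (N : aci K k m n) (I : {set 'I_m}) (J : {set 'I_n}) :
  mask_mx I *m aci_const N *m mask_mx J = 0 ->
  (forall t, mask_mx I *m aci_coef N t *m mask_mx J = 0) ->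
  forall v, mask_mx I *m completion N v *m mask_mx J = 0.
Proof.
move=> C0 T0 v; rewrite mulmxDr mulmxDl C0 add0r mulmx_sumr mulmx_suml.
by rewrite big1 // => t _; rewrite -scalemxAr -scalemxAl T0 scaler0.
Qed.

Lemma FRmR_aci_sub_rank m n (I : {set 'I_m}) (J : {set 'I_n}) (N : aci K k m n) :
  (#|J| = 0 -> #|I| = 0)%N -> FRmR (aci_sub I J N) ->
  exists v, \rank (mask_mx I *m completion N v *m mask_mx J) = #|I|.
Proof.
move=> J0I0 [/J0I0 I0 | [[v rkv] _]]; last by exists v; rewrite -mxrank_completion_sub.
exists (fun=> 0); apply/eqP; rewrite eqn_leq I0 leq0n andbT.
by rewrite -I0 mxrank_mask_le_rows.
Qed.

Lemma FCmR_aci_sub_rank m n (I : {set 'I_m}) (J : {set 'I_n}) (N : aci K k m n) :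
  (#|I| = 0 -> #|J| = 0)%N -> FCmR (aci_sub I J N) ->
  exists v, \rank (mask_mx I *m completion N v *m mask_mx J) = #|J|.
Proof.
move=> I0J0 [/I0J0 J0 | [[v rkv] _]]; last by exists v; rewrite -mxrank_completion_sub.
exists (fun=> 0); apply/eqP; rewrite eqn_leq J0 leq0n andbT.
by rewrite -J0 mxrank_mask_le_cols.
Qed.

Lemma FRmR_aci_sub m n (I : {set 'I_m}) (J : {set 'I_n}) (N : aci K k m n) v :
  \rank (mask_mx I *m completion N v *m mask_mx J) = #|I| -> FRmR (aci_sub I J N).
Proof.
move=> rkv; right; split=> [|v']; last exact: rank_leq_row.
by exists v; rewrite mxrank_completion_sub.
Qed.

Lemma FCmR_aci_sub m n (I : {set 'I_m}) (J : {set 'I_n}) (N : aci K k m n) v :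
  \rank (mask_mx I *m completion N v *m mask_mx J) = #|J| -> FCmR (aci_sub I J N).
Proof.
move=> rkv; right; split=> [|v']; last exact: rank_leq_col.
by exists v; rewrite mxrank_completion_sub.
Qed.

End Completions.

Lemma QF_entry_zero (K : fieldType) k m n (N : aci K k m n) (F : {set 'I_n})
    (I : {set 'I_m}) :
  (forall i j, i \in I -> j \in [set j : 'I_n | (j < #|F|)%N] ->
     entry_zero (aci_mulr N (QF K F)) i j) <->
  mask_mx I *m aci_const N *m mask_mx F = 0 /\
  forall t, mask_mx I *m aci_coef N t *m mask_mx F = 0.
Proof.
rewrite entry_zero_mask /=.
split=> -[C0 T0]; split=> [|t]; apply/eqP.
- by rewrite -QF_mask_lt_eq0 C0.
- by rewrite -QF_mask_lt_eq0 T0.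
- by rewrite QF_mask_lt_eq0 C0.
- by rewrite QF_mask_lt_eq0 T0.
Qed.

Section CoefSpan.
Variables (K : fieldType) (k m n : nat) (M : aci K k m n).
Implicit Types (F G : {set 'I_n}) (v : 'I_k -> K).

(* The row space of coef_span F is spanned by the columns of index in F of all
   the coefficient matrices of M, so coef_dim F is w(F). *)
Definition coef_span F : 'M[K]_m :=
  (<<mask_mx F *m (aci_const M)^T>> + \sum_(t < k) <<mask_mx F *m (aci_coef M t)^T>>)%MS.

Definition coef_dim F := \rank (coef_span F).

Lemma coef_span_sub F (Y : 'M[K]_m) :
  (mask_mx F *m (aci_const M)^T <= Y)%MS ->
  (forall t, mask_mx F *m (aci_coef M t)^T <= Y)%MS -> (coef_span F <= Y)%MS.
Proof.
move=> CY TY; rewrite addsmx_sub genmxE CY /=.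
by apply/sumsmx_subP => t _; rewrite genmxE.
Qed.

Lemma coef_span_const F : (mask_mx F *m (aci_const M)^T <= coef_span F)%MS.
Proof. by apply: submx_trans (addsmxSl _ _); rewrite genmxE. Qed.

Lemma coef_span_coef F t : (mask_mx F *m (aci_coef M t)^T <= coef_span F)%MS.
Proof. by apply: submx_trans (addsmxSr _ _); apply: (sumsmx_sup t); rewrite ?genmxE. Qed.

Lemma completion_coef_span F v : (mask_mx F *m (completion M v)^T <= coef_span F)%MS.
Proof.
rewrite linearD /= mulmxDr addmx_sub ?coef_span_const // linear_sum mulmx_sumr.
by apply: summx_sub => t _; rewrite linearZ /= -scalemxAr scalemx_sub ?coef_span_coef.
Qed.

Lemma mxrank_completion_le F v : (\rank (completion M v) + #|F| <= n + coef_dim F)%N.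
Proof.
set X := completion M v.
have rkXF : (\rank (X *m mask_mx F) <= coef_dim F)%N.
  by rewrite -mxrank_tr trmx_mul tr_mask_mx mxrankS ?completion_coef_span.
have rkXCF : (\rank (X *m mask_mx (~: F)) <= #|~: F|)%N.
  by rewrite -(mxrank_mask_mx K) mxrankM_maxr.
have := mxrank_add (X *m mask_mx F) (X *m mask_mx (~: F)).
by rewrite -mask_mx_splitr; have := cardsC F; rewrite card_ord; lia.
Qed.

Lemma tight_rank_ge F v v' :
  (\rank (completion M v) + #|F| = n + coef_dim F)%N ->
  (\rank (completion M v') <= \rank (completion M v))%N.
Proof. by have := mxrank_completion_le F v'; lia. Qed.

Lemma coef_dim_annihilator F p (L : 'M[K]_(p, m)) :
  L *m aci_const M *m mask_mx F = 0 -> (forall t, L *m aci_coef M t *m mask_mx F = 0) ->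
  (coef_dim F + \rank L <= m)%N.
Proof.
move=> LC0 LT0; have span_ker : (coef_span F <= kermx L^T)%MS.
  apply: coef_span_sub => [|t]; apply/sub_kermxP;
  by rewrite -tr_mask_mx -!trmx_mul mulmxA ?LC0 ?LT0 trmx0.
have := mxrankS span_ker; rewrite mxrank_ker mxrank_tr -/(coef_dim F).
by have := rank_leq_col L; lia.
Qed.

Lemma coef_span_mask_sub F G (X : 'M[K]_n) :
  mask_mx G = X *m mask_mx F -> (coef_span G <= coef_span F)%MS.
Proof.
move=> GXF; apply: coef_span_sub => [|t]; rewrite GXF -mulmxA;
  by apply: submx_trans (submxMl _ _) _; rewrite ?coef_span_const ?coef_span_coef.
Qed.

Lemma coef_dim_submod F G :
  (coef_dim (F :&: G) + coef_dim (F :|: G) <= coef_dim F + coef_dim G)%N.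
Proof.
rewrite -[(coef_dim F + _)%N]mxrank_sum_cap addnC leq_add //; apply: mxrankS.
  apply: coef_span_sub => [|t]; rewrite mask_mxU mulmxDl -mulmxA addmx_sub //.
  - by rewrite (submx_trans (coef_span_const _)) ?addsmxSl.
  - by rewrite (submx_trans (submxMl _ _)) // (submx_trans (coef_span_const _)) ?addsmxSr.
  - by rewrite (submx_trans (coef_span_coef _ _)) ?addsmxSl.
  - by rewrite (submx_trans (submxMl _ _)) // (submx_trans (coef_span_coef _ _)) ?addsmxSr.
rewrite sub_capmx; apply/andP; split; apply: (@coef_span_mask_sub _ _ (mask_mx (F :&: G))).
  by rewrite mask_mxM setIAC setIid.
by rewrite mask_mxM -setIA setIid.
Qed.

Lemma completion_splice F va vc : is_ACI M -> exists v,
  completion M v *m mask_mx F = completion M va *m mask_mx F /\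
  completion M v *m mask_mx (~: F) = completion M vc *m mask_mx (~: F).
Proof.
move=> M_aci; pose inF t := [exists j in F, col j (aci_coef M t) != 0].
have col_neq0 t i j : aci_coef M t i j != 0 -> col j (aci_coef M t) != 0.
  by apply: contraNneq => /matrixP/(_ i 0); rewrite !mxE => ->.
exists (fun t => if inF t then va t else vc t).
split; apply/matrixP => i j; rewrite !mul_mx_mask ?inE;
  case: (boolP (j \in F)) => jF; rewrite ?mulr0 ?mulr1 //=; apply: completion_eq_col.
  move=> t i' /col_neq0 tj; suff -> : inF t by [].
  by apply/existsP; exists j; rewrite jF.
move=> t i' /col_neq0 tj; rewrite /inF; case: existsP => // -[j' /andP [j'F tj']].
by move: jF; rewrite (M_aci t j j' tj tj') j'F.
Qed.

Lemma coef_span_basis F : exists2 R : 'M[K]_m, R \in unitmx &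
  forall C : 'M[K]_(m, n), (mask_mx F *m C^T <= coef_span F)%MS ->
    mask_mx [set i : 'I_m | (coef_dim F <= i)%N] *m R *m C *m mask_mx F = 0.
Proof.
set W := (coef_span F)^T.
exists (invmx (col_ebase W)); first by rewrite unitmx_inv col_ebase_unit.
move=> C /submxP [D CD]; rewrite -mulmxA.
have -> : C *m mask_mx F = W *m D^T.
  by apply: trmx_inj; rewrite !trmx_mul tr_mask_mx !trmxK CD.
rewrite -[X in X *m D^T](mulmx_ebase W) !mulmxA mulmxKV ?col_ebase_unit //.
rewrite mxrank_tr -/(coef_dim F).
have -> : mask_mx [set i : 'I_m | (coef_dim F <= i)%N] *m pid_mx (coef_dim F) = 0 :> 'M[K]_m.
  apply/matrixP => i j; rewrite mul_mask_mx !mxE inE.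
  by case: leqP => _; rewrite ?mul0r // andbF mulr0.
by rewrite !mul0mx.
Qed.

End CoefSpan.

Section FactorLike.
Variables (K : fieldType) (k m n : nat) (M : aci K k m n).
Variable cmp : nat -> nat -> bool.

Lemma factor_like_tight (F : {set 'I_n}) :
  (forall a b, cmp a b -> b <= a)%N -> is_ACI M -> factor_like cmp M F ->
  exists v, (\rank (completion M v) + #|F| = n + coef_dim M F)%N /\
            cmp (m + n - \rank (completion M v)) (maxn m n).
Proof.
move=> cmp_ge M_aci [R [R_unit [r [le_rm]]]] /=.
set s := #|F|; set T := [set i : 'I_m | (i < m - r)%N].
rewrite -setC_ord_lt -/T => -[Z0 [cmp_rs [TL BR]]].
have le_sn : (s <= n)%N by have := max_card F; rewrite card_ord.
have := cmp_ge _ _ cmp_rs; rewrite geq_max => /andP [le_m_rs le_n_rs].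
have cardT : #|T| = (m - r)%N by rewrite card_ord_lt ?leq_subr.
have cardCT : #|~: T| = r by rewrite setC_ord_lt card_ord_ge ?leq_subr ?subKn.
have [C0 T0] : mask_mx (~: T) *m (R *m aci_const M) *m mask_mx F = 0 /\
    forall t, mask_mx (~: T) *m (R *m aci_coef M t) *m mask_mx F = 0.
  by apply/(QF_entry_zero (aci_mull R M)) => i j; rewrite setC_ord_lt !inE; apply: Z0.
have [|va rk_va] := FRmR_aci_sub_rank _ TL; first by rewrite card_ord_lt // cardT; lia.
have [|vc rk_vc] := FCmR_aci_sub_rank _ BR; first by rewrite card_ord_ge // cardCT; lia.
rewrite completion_mulr completion_mull mxrank_QF_mask_lt cardT in rk_va.
rewrite completion_mulr completion_mull mxrank_QF_mask_ge card_ord_ge // in rk_vc.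
have [v [vF vCF]] := completion_splice F va vc M_aci.
have P_utri : mask_mx (~: T) *m (R *m completion M v) *m mask_mx F = 0.
  by rewrite -completion_mull; apply: completion_mask_eq0.
have := mxrank_utri_ge P_utri; rewrite -!mulmxA vF vCF !mulmxA -!(mulmxA _ R).
rewrite rk_va rk_vc (eqmxMfull _ (_ : row_full R)) ?row_full_unit // => rk_ge.
have dim_le : (coef_dim M F + r <= m)%N.
  have := @coef_dim_annihilator _ _ _ _ M F _ (mask_mx (~: T) *m R).
  rewrite mxrankMfree ?row_free_unit // mxrank_mask_mx cardCT.
  by apply=> [|t]; rewrite -(mulmxA _ R).
have := mxrank_completion_le M F v.
by exists v; split; [lia | have -> : (m + n - \rank (completion M v) = r + s)%N by lia].
Qed.

Lemma tight_factor_like (F : {set 'I_n}) v :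
  (\rank (completion M v) + #|F| = n + coef_dim M F)%N ->
  cmp (m + n - \rank (completion M v)) (maxn m n) -> factor_like cmp M F.
Proof.
move=> tight cmp_v; have [R R_unit R_span] := coef_span_basis M F.
set d := coef_dim M F in tight R_span *.
have le_dm : (d <= m)%N by apply: rank_leq_col.
have le_sn : (#|F| <= n)%N by have := max_card F; rewrite card_ord.
exists R; split => //; exists (m - d)%N; split; first exact: leq_subr.
rewrite subKn //= -setC_ord_lt; set T := [set i : 'I_m | (i < d)%N].
have [C0 T0] : mask_mx (~: T) *m (R *m aci_const M) *m mask_mx F = 0 /\
    forall t, mask_mx (~: T) *m (R *m aci_coef M t) *m mask_mx F = 0.
  by rewrite setC_ord_lt; split=> [|t]; rewrite mulmxA R_span ?coef_span_const ?coef_span_coef.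
have P_utri : mask_mx (~: T) *m (R *m completion M v) *m mask_mx F = 0.
  by rewrite -completion_mull; apply: completion_mask_eq0.
have [|rk_TL rk_BR] := mxrank_utri_full P_utri.
  rewrite (eqmxMfull _ (_ : row_full R)) ?row_full_unit // card_ord_lt //.
  by have := cardsC F; rewrite card_ord; lia.
split.
  have Z := iffRL (QF_entry_zero (aci_mull R M) F (~: T)) (conj C0 T0).
  by move=> i j di jF; apply: Z; rewrite !inE -?leqNgt.
split; first by have -> : (m - d + #|F| = m + n - \rank (completion M v))%N by lia.
split; [apply: (@FRmR_aci_sub _ _ _ _ _ _ _ v) | apply: (@FCmR_aci_sub _ _ _ _ _ _ _ v)];
  rewrite completion_mulr completion_mull.
  by rewrite mxrank_QF_mask_lt.
by rewrite mxrank_QF_mask_ge rk_BR card_ord_ge // cardsCs setCK card_ord.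
Qed.

Lemma factor_like_setIU (F1 F2 : {set 'I_n}) :
  (forall a b, cmp a b -> b <= a)%N -> is_ACI M ->
  factor_like cmp M F1 -> factor_like cmp M F2 ->
  factor_like cmp M (F1 :&: F2) /\ factor_like cmp M (F1 :|: F2).
Proof.
move=> cmp_ge M_aci /(factor_like_tight cmp_ge M_aci) [v1 [tight1 cmp1]].
move=> /(factor_like_tight cmp_ge M_aci) [v2 [tight2 _]].
have rk12 : \rank (completion M v2) = \rank (completion M v1).
  by apply/eqP; rewrite eqn_leq (tight_rank_ge _ tight1) (tight_rank_ge _ tight2).
rewrite rk12 in tight2.
have [|tightI tightU] := submod_minimizers_setIU (f := fun G => n + coef_dim M G)
    _ (fun G => mxrank_completion_le M G v1) tight1 tight2.
  by have := coef_dim_submod M F1 F2; lia.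
by split; apply: tight_factor_like cmp1.
Qed.

End FactorLike.


Theorem theorem5p6 (K : fieldType) (k m n : nat) (M : aci K k m n) :
  is_ACI M ->
  forall F1 F2 : {set 'I_n},
    (factor_set M F1 -> factor_set M F2 ->
       factor_set M (F1 :&: F2) /\ factor_set M (F1 :|: F2)) /\
    (semifactor_set M F1 -> semifactor_set M F2 ->
       semifactor_set M (F1 :&: F2) /\ semifactor_set M (F1 :|: F2)).
Proof.
move=> M_aci F1 F2; split; apply: factor_like_setIU => // a b; first exact: ltnW.
by move/eqP ->.
Qed.
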